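(* Let $n\ge1$, $q\in\mathbb{C}^\times$, $\beta=-q-q^{-1}$, $0\le d\le n$ with $d\equiv n \bmod 2$, and $z\in\mathbb{C}^\times$. Then, as modules over the periodic Temperley--Lieb algebra $\mathsf{pTL}_n(\beta)$, the standard modules $\mathsf{W}_{n,d,z}$ and $\mathsf{W}_{n,d,-z}$ are isomorphic.
   Context: $\mathsf{pTL}_n(\beta)$ is the unital algebra of connectivities generated by $e_0,\dots,e_{n-1}$, where connectivities are diagrams on a cylinder (rectangle with left and right edges identified) with $n$ top and $n$ bottom nodes connected pairwise by non-intersecting curves; $e_j$ ($1\le j\le n-1$) joins top nodes $j,j+1$ and bottom nodes $j,j+1$ with all other strands vertical, and $e_0$ does the same for nodes $n,1$ across the periodic boundary; products stack the second factor on top of the first. A link state with $n$ nodes and $d$ defects is a diagram drawn above a horizontal segment with $n$ nodes, with periodic boundary condition, in which $(n-d)/2$ non-intersecting arcs join nodes pairwise (possibly crossing the periodic boundary) and the remaining $d$ nodes carry defects, vertical lines extending upward to infinity that cannot be overarched; $\mathsf{B}_{n,d}$ is the set of such link states, $|\mathsf{B}_{n,d}|=\binom{n}{(n-d)/2}$. The standard module $\mathsf{W}_{n,d,z}$ is the vector space with basis $\mathsf{B}_{n,d}$, on which a connectivity $c$ acts on $w$ by drawing $w$ above $c$: the result is $0$ if two defects get joined; otherwise it is the link state read off at the bottom, multiplied by $\beta$ for each contractible loop, by $\alpha=z+z^{-1}$ for each non-contractible loop (possible only when $d=0$), and, for $d>0$, by $z$ (resp. $z^{-1}$) for each time a defect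 crosses the periodic boundary moving leftwards (resp. rightwards) as it goes down. *)

From HB Require Import structures.
From mathcomp Require Import all_boot all_order all_algebra.
Set Implicit Arguments.
Unset Strict Implicit.
Unset Printing Implicit Defensive.
Import Order.TTheory GRing.Theory Num.Theory.

Section PTL.
Variable n : nat.

(* Nodes are 0..n-1 (node k+1 of the paper is k).
   A raw link state assigns to each node either [None] (a defect) or
   [Some (r, p)]: the node is joined by an arc to node [p], the arc leaving
   the node towards the right (r = true) or towards the left (r = false),
   possibly crossing the periodic boundary. *)
Definition raw := {ffun 'I_n -> option (bool * 'I_n)}.

(* the ordinal k mod n (n > 0 is witnessed by i : 'I_n) *)
Definition ordm (i : 'I_n) (k : nat) : 'I_n :=
  @Ordinal n (k %% n) (ltn_pmod k (leq_ltn_trans (leq0n i) (ltn_ord i))).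

Definition ordz (i : 'I_n) (x : int) : 'I_n := ordm i `|(x %% n)%Z|%N.

Definition rdist (i x : 'I_n) : nat := (x + n - i) %% n.

(* signed displacement (in the universal cover) of the arc leaving node i *)
Definition off (i : 'I_n) (e : bool * 'I_n) : int :=
  if e.1 then Posz (rdist i e.2) else (- Posz (rdist e.2 i))%R.

(* validity: consistency of the pairing, exactly d defects, and planarity:
   every node strictly under an arc (i -> p, drawn rightwards from i) is
   joined by an arc to a node strictly under that same arc, the arc staying
   under it (no crossing, no overarched defect, also on the cylinder). *)
Definition valid (d : nat) (P : raw) : bool :=
  [&& [forall i, if P i is Some (r, p) then (p != i) && (P p == Some (~~ r, i))
                 else true],
      #|[pred i | P i == None]| == d &
      [forall i, if P i is Some (true, p) then
         [forall x, (0 < rdist i x < rdist i p)%N ==>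
            (if P x is Some e then
               (0 < Posz (rdist i x) + off x e < Posz (rdist i p))%R
             else false)]
       else true]].

Definition linkstate (d : nat) := {P : raw | valid d P}.

Section Action.
Variables (C : numClosedFieldType) (beta z : C).
Local Open Scope ring_scope.

(* action of the generator e_j on a link state (as a raw state):
   e_j joins a := j-1 and b := j (indices mod n; for j = 0 across the
   periodic boundary, the arc going rightwards from a = n-1 to b = 0).
   Returns [None] for the zero vector, or [Some (c, P')] for c * P'. *)
Definition gen_act (j : 'I_n) (P : raw) : option (C * raw) :=
  let b := j in
  let a := ordm j (j + n - 1)%N in
  let alpha := z + z^-1 in
  let upd (f : 'I_n -> option (bool * 'I_n)) : raw :=
    [ffun x => if x == a then Some (true, b)
               else if x == b then Some (false, a) else f x] in
  match P a, P b with
  | None, None => None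
  | None, Some eb =>
      (* defect at a travels along the cup to b, then along the arc of b *)
      let c := eb.2 in
      Some ((z ^ (- ((Posz a + 1 + off b eb) %/ Posz n)%Z))%R,
            upd (fun x => if x == c then None else P x))
  | Some ea, None =>
      let c := ea.2 in
      Some ((z ^ (- ((Posz b - 1 + off a ea) %/ Posz n)%Z))%R,
            upd (fun x => if x == c then None else P x))
  | Some (r, p), Some eb =>
      if p == b then
        (if r then Some (beta, P)            (* contractible loop *)
         else Some (alpha, upd P))           (* non-contractible loop *)
      else
        let c := p in let c' := eb.2 in
        let l := (1 + off b eb - off a (r, p))%R in
        Some (1, upd (fun x => if x == c then Some (0 < l, c')%R
                               else if x == c' then Some (l < 0, c)%R
                               else P x))
  end.

Definition gen_coef (j : 'I_n) (P' P : raw) : C :=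
  if gen_act j P is Some (c, Q) then (if Q == P' then c else 0) else 0.

(* matrix of e_j acting on W_{n,d,z} (column vectors, in the basis
   B_{n,d} enumerated by enum_val) *)
Definition std_rep (d : nat) (j : 'I_n) : 'M[C]_#|{: linkstate d}| :=
  \matrix_(i, k) gen_coef j (val (enum_val i)) (val (enum_val k)).

End Action.

(* W_{n,d,z} and W_{n,d,z'} are isomorphic as pTL_n(beta)-modules:
   a linear isomorphism intertwining the action of every generator e_j
   (the generators exist for n >= 2; pTL_1 is spanned by the identity). *)
Definition std_modules_iso (C : numClosedFieldType) (beta z z' : C) (d : nat) :
    Prop :=
  exists A : 'M[C]_#|{: linkstate d}|,
    A \in unitmx /\
    forall j : 'I_n, (1 < n)%N ->
      (A *m std_rep beta z d j = std_rep beta z' d j *m A)%R.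

End PTL.

From mathcomp Require Import all_boot all_order all_algebra.
From mathcomp Require Import zify.
Import Order.TTheory GRing.Theory Num.Theory.
Set Implicit Arguments.
Unset Strict Implicit.
Unset Printing Implicit Defensive.

(* The intertwiner is diagonal in the basis of link states: it multiplies a
   link state by (-1)^k, where k is the number of its arcs crossing the
   periodic boundary.  In the universal cover of the cylinder every arc has a
   winding number, and the power of z produced by e_j is, up to sign, the
   winding of the defect that e_j moves.  Displacements add up in the cover, so
   the windings of the arcs created by e_j are linear combinations of those it
   destroys; mod 2 the parity of boundary-crossing arcs thus changes exactly
   like the power of z, or flips for a non-contractible loop, whose weight
   z + z^-1 changes sign with z. *)

Section Windings.
Variable n : nat.
Local Open Scope ring_scope.

Definition wraps (e : option (bool * 'I_n)) (i : 'I_n) : bool :=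
  if e is Some (true, p) then (p < i)%N else false.

Definition wind (i : 'I_n) (e : bool * 'I_n) : int :=
  if e.1 then (e.2 < i)%N%:Z else - (i < e.2)%N%:Z.

Lemma rdist_cases (i x : 'I_n) :
  (rdist i x = x + n - i /\ x < i \/ rdist i x = x - i /\ i <= x)%N.
Proof.
have := ltn_ord i; have := ltn_ord x => ltx lti; rewrite /rdist.
case: ltnP => [x_lt_i|i_le_x]; [left | right]; split=> //.
  by rewrite modn_small; lia.
by rewrite (_ : x + n - i = (x - i) + n)%N ?modnDr ?modn_small; lia.
Qed.

Lemma off_lift (i p : 'I_n) (r : bool) :
  Posz i + off i (r, p) = Posz p + wind i (r, p) * n.
Proof.
have := ltn_ord i; have := ltn_ord p; case: r; rewrite /off /wind /=.
  by have := rdist_cases i p; case: (ltnP p i) => /=; lia.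
by have := rdist_cases p i; case: (ltnP i p) => /=; lia.
Qed.

Lemma off_bounds (i p : 'I_n) (r : bool) : p != i ->
  if r then 0 < off i (r, p) < n else - (n : int) < off i (r, p) < 0.
Proof.
rewrite -val_eqE /= => ne_pi; have := ltn_ord i; have := ltn_ord p.
case: r; rewrite /off /=.
  by have := rdist_cases i p; lia.
by have := rdist_cases p i; lia.
Qed.

Lemma wraps_arc (i p : 'I_n) (r : bool) :
  (wraps (Some (r, p)) i + wraps (Some (~~ r, i)) p)%N = `|wind i (r, p)|%N.
Proof. by case: r; rewrite /wind /= ?addn0 ?abszN. Qed.

Lemma wraps_lift (c c' : 'I_n) (l k : int) :
  - (n : int) < l < n -> Posz c + l = Posz c' + k * n ->
  (wraps (Some ((0 < l)%R, c')) c + wraps (Some ((l < 0)%R, c)) c')%N = `|k|%N.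
Proof.
have := ltn_ord c; have := ltn_ord c' => ltc' ltc bl lift.
have : k = -1 \/ k = 0 \/ k = 1 by nia.
by case=> [|[]] ek; rewrite ek in lift *; case: (ltrgt0P l) => hl /=; lia.
Qed.

Lemma odd_absz_cycle (t : bool) (w1 w2 : int) :
  odd (`|w1| + `|w2| + t + `|(Posz t + w2 - w1)%R|)%N = false.
Proof. lia. Qed.

Lemma divz_lift (c : 'I_n) (k : int) : ((Posz c + k * n) %/ n)%Z = k.
Proof.
have := ltn_ord c => ltc.
have n_neq0 : (n : int) != 0 by rewrite eqz_nat; lia.
by rewrite addrC divzMDl // divz_small ?addr0 //; apply/andP; split; lia.
Qed.

Lemma ordm_pred_adj (j : 'I_n) : (1 < n)%N ->
  ((ordm j (j + n - 1)).+1 = j + (j < ordm j (j + n - 1)) * n)%N.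
Proof.
move=> n_gt1; have := ltn_ord j; rewrite /=.
case: (posnP j) => [-> | j_gt0] ltj.
  by rewrite add0n modn_small; lia.
by rewrite (_ : j + n - 1 = (j - 1) + n)%N ?modnDr ?modn_small; lia.
Qed.

End Windings.

Section WrapSign.
Variables (n : nat) (R : comPzRingType).
Local Open Scope ring_scope.

Definition wrap_sign (P : raw n) : R := \prod_i (-1) ^+ wraps (P i) i.

Lemma signr_odd_eq (k m : nat) : odd k = odd m -> (-1) ^+ k = (-1) ^+ m :> R.
Proof. by move=> e; rewrite -signr_odd e signr_odd. Qed.

Lemma wrap_signK (P : raw n) : wrap_sign P * wrap_sign P = 1.
Proof.
by rewrite -big_split; apply: big1 => i _ /=; rewrite -signr_addb addbb.
Qed.

Lemma wrap_sign_local (P Q : raw n) (s : seq 'I_n) : uniq s ->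
    (forall x, x \notin s -> P x = Q x) ->
  wrap_sign P * wrap_sign Q =
    (-1) ^+ (\sum_(x <- s) (wraps (P x) x + wraps (Q x) x))%N.
Proof.
move=> uniq_s PQ; rewrite -big_split /= (bigID (mem s)) /=.
rewrite [X in _ * X]big1 ?mulr1 => [|x /PQ ->]; last first.
  by rewrite -signr_addb addbb.
rewrite -big_uniq //= (big_morph _ (@exprD _ _) (expr0 _)).
by apply: eq_bigr => x _; rewrite exprD.
Qed.

End WrapSign.

Section Validity.
Variables (n d : nat) (P : raw n).
Local Open Scope ring_scope.
Hypothesis P_valid : valid d P.

Lemma valid_partner (i p : 'I_n) (r : bool) :
  P i = Some (r, p) -> p != i /\ P p = Some (~~ r, i).
Proof.
case/and3P: P_valid => /forallP /(_ i) + _ _ Pi.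
by rewrite Pi => /andP[-> /eqP ->].
Qed.

Lemma valid_nested (i p x : 'I_n) : P i = Some (true, p) ->
    (0 < rdist i x < rdist i p)%N ->
  exists2 e, P x = Some e & 0 < Posz (rdist i x) + off x e < Posz (rdist i p).
Proof.
case/and3P: P_valid => _ _ /forallP /(_ i) + Pi x_in.
rewrite Pi => /forallP /(_ x); rewrite x_in /=.
by case: (P x) => // e; exists e.
Qed.

End Validity.

Section Cup.
Variables (n : nat) (a j : 'I_n).
Local Open Scope ring_scope.
Hypothesis n_gt1 : (1 < n)%N.
Hypothesis adj : (a.+1 = j + (j < a) * n)%N.

Definition cup (f : 'I_n -> option (bool * 'I_n)) : raw n :=
  [ffun x => if x == a then Some (true, j)
             else if x == j then Some (false, a) else f x].

Lemma adj_cases : (j = 0 :> nat /\ a = n.-1 :> nat \/ a.+1 = j)%N.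
Proof. by have := ltn_ord a; move: adj; case: ltnP => /=; lia. Qed.

Lemma cup_neq : a != j.
Proof.
by apply/eqP => /(congr1 val) /= eq_aj; move: adj; rewrite eq_aj; lia.
Qed.

Lemma wrap_sign_cup (R : comPzRingType) (P : raw n) f (s : seq 'I_n) :
    uniq [:: a, j & s] -> (forall x, x \notin [:: a, j & s] -> f x = P x) ->
  wrap_sign R P * wrap_sign R (cup f) =
    (-1) ^+ (wraps (P a) a + wraps (P j) j + (j < a)
             + \sum_(x <- s) (wraps (P x) x + wraps (f x) x))%N.
Proof.
move=> uniq_ajs fP; rewrite (wrap_sign_local _ uniq_ajs); last first.
  move=> x x_out; rewrite ffunE -fP //.
  by move: x_out; rewrite !inE !negb_or => /and3P[/negPf -> /negPf ->].
rewrite !big_cons !ffunE eqxx eq_sym (negPf cup_neq) eqxx /=.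
move: uniq_ajs; rewrite /= inE negb_or => /and3P[/andP[_ a_s] j_s _].
rewrite (eq_big_seq (fun x => wraps (P x) x + wraps (f x) x)%N).
  by rewrite addn0 !addnA (addnAC _ (j < a)%N).
move=> x x_s; rewrite ffunE.
case: eqP => [ax | _]; first by rewrite -ax x_s in a_s.
by case: eqP => // jx; rewrite -jx x_s in j_s.
Qed.

Variables (R : comPzRingType) (d : nat) (P : raw n).
Hypothesis P_valid : valid d P.

Lemma wrap_sign_cup_defect_right (rb : bool) (c' : 'I_n) :
    P a = None -> P j = Some (rb, c') ->
  wrap_sign R P * wrap_sign R (cup (fun x => if x == c' then None else P x)) =
    (-1) ^+ `|((Posz a + 1 + off j (rb, c')) %/ n)%Z|.
Proof.
move=> Pa Pj; have [c'j Pc'] := valid_partner P_valid Pj.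
have c'a : c' != a by apply/eqP => c'a; rewrite -c'a Pc' in Pa.
rewrite (@wrap_sign_cup _ _ _ [:: c']); first last.
- by move=> x; rewrite !inE !negb_or => /and3P[_ _ /negPf ->].
- by rewrite /= !inE !negb_or cup_neq eq_sym c'a eq_sym c'j.
have lift : Posz a + 1 + off j (rb, c') =
             Posz c' + (Posz (j < a)%N + wind j (rb, c')) * n.
  by have := off_lift j c' rb; lia.
rewrite big_seq1 eqxx Pa Pj Pc' lift divz_lift /=; apply: signr_odd_eq.
by have /= := wraps_arc j c' rb; lia.
Qed.

Lemma wrap_sign_cup_defect_left (ra : bool) (c : 'I_n) :
    P a = Some (ra, c) -> P j = None ->
  wrap_sign R P * wrap_sign R (cup (fun x => if x == c then None else P x)) =
    (-1) ^+ `|((Posz j - 1 + off a (ra, c)) %/ n)%Z|.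
Proof.
move=> Pa Pj; have [ca Pc] := valid_partner P_valid Pa.
have cj : c != j by apply/eqP => cj; rewrite -cj Pc in Pj.
rewrite (@wrap_sign_cup _ _ _ [:: c]); first last.
- by move=> x; rewrite !inE !negb_or => /and3P[_ _ /negPf ->].
- by rewrite /= !inE !negb_or cup_neq eq_sym ca eq_sym cj.
have lift : Posz j - 1 + off a (ra, c) =
             Posz c + (wind a (ra, c) - Posz (j < a)%N) * n.
  by have := off_lift a c ra; lia.
rewrite big_seq1 eqxx Pa Pj Pc lift divz_lift /=; apply: signr_odd_eq.
by have /= := wraps_arc a c ra; lia.
Qed.

Lemma wrap_sign_cup_loop :
  P a = Some (false, j) -> wrap_sign R P * wrap_sign R (cup P) = -1.
Proof.
move=> Pa; have [_ Pj] := valid_partner P_valid Pa.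
rewrite (@wrap_sign_cup _ _ _ [::]) //=; last by rewrite inE cup_neq.
rewrite big_nil Pa Pj /= -[RHS]expr1; apply: signr_odd_eq.
by have := cup_neq; rewrite -val_eqE /=; lia.
Qed.

Lemma cup_arcs_neq (ra rb : bool) (c c' : 'I_n) :
  P a = Some (ra, c) -> P j = Some (rb, c') -> c != j -> c' != a /\ c != c'.
Proof.
move=> Pa Pj cj; have [_ Pc] := valid_partner P_valid Pa.
have [_ Pc'] := valid_partner P_valid Pj; split.
  by apply: contraNneq cj => c'a; move: Pa; rewrite -c'a Pc' => -[_ ->].
apply: contraNneq cup_neq => cc'.
by move: Pc; rewrite cc' Pc' => -[_ ->].
Qed.

(* Planarity is needed only when the two arcs point in opposite directions. *)
Lemma cup_arc_length (ra rb : bool) (c c' : 'I_n) :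
    P a = Some (ra, c) -> P j = Some (rb, c') -> c != j ->
  - (n : int) < 1 + off j (rb, c') - off a (ra, c) < n.
Proof.
move=> Pa Pj cj; have [ca Pc] := valid_partner P_valid Pa.
have [c'j Pc'] := valid_partner P_valid Pj.
have [c'a cc'] := cup_arcs_neq Pa Pj cj.
have := off_bounds ra ca; have := off_bounds rb c'j.
move: cj ca c'j c'a cc'; rewrite -!val_eqE /= => cj ca c'j c'a cc'.
have [lta ltj ltc ltc'] : [/\ a < n, j < n, c < n & c' < n]%N.
  by rewrite !ltn_ord.
have := adj_cases.
case: ra Pa Pc; case: rb Pj Pc' => Pj Pc' Pa Pc aj off_j off_a; try lia.
- have j_in : (0 < rdist a j < rdist a c)%N.
    by have := rdist_cases a j; have := rdist_cases a c; lia.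
  have [e] := valid_nested P_valid Pa j_in; rewrite Pj => -[<-].
  by rewrite /off /= in off_j *; have := rdist_cases a j; lia.
have nest : (0 < rdist c c' < rdist c a)%N ->
    0 < Posz (rdist c c') + off c' (false, j) < Posz (rdist c a).
  move=> c'_in; have [e] := valid_nested P_valid Pc c'_in.
  by rewrite Pc' => -[<-].
move: nest; rewrite /off /=.
have := rdist_cases c c'; have := rdist_cases c a.
by have := rdist_cases j c'; lia.
Qed.

Lemma wrap_sign_cup_arcs (ra rb : bool) (c c' : 'I_n) (l : int) :
    P a = Some (ra, c) -> P j = Some (rb, c') -> c != j ->
    l = 1 + off j (rb, c') - off a (ra, c) ->
  wrap_sign R P * wrap_sign R (cup (fun x => if x == c then Some (0 < l, c')
                                           else if x == c' then Some (l < 0, c)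
                                           else P x)) = 1.
Proof.
move=> Pa Pj cj el; have [ca Pc] := valid_partner P_valid Pa.
have [c'j Pc'] := valid_partner P_valid Pj.
have [c'a cc'] := cup_arcs_neq Pa Pj cj.
rewrite (@wrap_sign_cup _ _ _ [:: c; c']); first last.
- by move=> x; rewrite !inE !negb_or => /and4P[_ _ /negPf -> /negPf ->].
- by rewrite /= !inE !negb_or cup_neq cc' !(eq_sym a) !(eq_sym j) ca c'a cj c'j.
have lift : Posz c + l =
             Posz c' + (Posz (j < a)%N + wind j (rb, c') - wind a (ra, c)) * n.
  by rewrite el; have := off_lift a c ra; have := off_lift j c' rb; lia.
have := cup_arc_length Pa Pj cj; rewrite -el => /wraps_lift /(_ lift) new_arc.
rewrite !big_cons big_nil /= eqxx eq_sym (negPf cc') eqxx Pa Pj Pc Pc'.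
have arc_a := wraps_arc a c ra; have arc_j := wraps_arc j c' rb.
rewrite -[RHS](expr0 (-1)); apply: signr_odd_eq.
set w1 := wind a (ra, c); set w2 := wind j (rb, c').
rewrite (_ : odd _ =
             odd (`|w1| + `|w2| + (j < a) + `|(Posz (j < a)%N + w2 - w1)%R|)%N).
  by rewrite odd_absz_cycle.
by congr odd; rewrite -arc_a -arc_j -new_arc; lia.
Qed.

End Cup.

Section Action.
Variables (n d : nat) (C : numClosedFieldType) (beta z : C).
Local Open Scope ring_scope.

Lemma gen_act_oppz (j : 'I_n) (P : raw n) : (1 < n)%N -> valid d P ->
  gen_act beta (- z) j P =
    omap (fun cQ => (wrap_sign C P * wrap_sign C cQ.2 * cQ.1, cQ.2))
         (gen_act beta z j P).
Proof.
move=> n_gt1 P_valid; have adj := ordm_pred_adj j n_gt1.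
rewrite /gen_act; set a := ordm j _ in adj *.
case Pa : (P a) => [[ra c]|]; case Pj : (P j) => [[rb c']|] //=.
- case: eqP => [cj | /eqP cj]; last first.
    by rewrite /= (wrap_sign_cup_arcs n_gt1 adj _ P_valid Pa Pj cj erefl) mul1r.
  rewrite cj in Pa *; case: ra Pa => Pa /=; first by rewrite wrap_signK mul1r.
  by rewrite (wrap_sign_cup_loop n_gt1 adj _ P_valid Pa) mulN1r invrN opprD.
- by rewrite expNrz expN1r abszN
             (wrap_sign_cup_defect_left n_gt1 adj _ P_valid Pa Pj).
- by rewrite expNrz expN1r abszN
             (wrap_sign_cup_defect_right n_gt1 adj _ P_valid Pa Pj).
Qed.

Lemma gen_coef_oppz (j : 'I_n) (P' P : raw n) : (1 < n)%N -> valid d P ->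
  gen_coef beta (- z) j P' P =
    wrap_sign C P * wrap_sign C P' * gen_coef beta z j P' P.
Proof.
move=> n_gt1 P_valid; rewrite /gen_coef gen_act_oppz //.
by case: gen_act => [[c Q]|] /=; [case: eqP => [->|_] |]; rewrite ?mulr0.
Qed.

End Action.

Theorem lemma2p4 (C : numClosedFieldType) (n : nat) (q : C) (d : nat) (z : C) :
  (1 <= n)%N -> (q != 0)%R -> (d <= n)%N -> d = n %[mod 2] -> (z != 0)%R ->
  std_modules_iso n (- q - q^-1)%R z (- z)%R d.
Proof.
(* The sign twist intertwines the two actions for every beta, d and z. *)
move=> _ _ _ _ _.
pose S : 'M[C]_#|{: linkstate n d}| :=
  diag_mx (\row_i wrap_sign C (val (enum_val i))).
have SS : (S *m S = 1%:M)%R.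
  by apply/matrixP => i k; rewrite mulmx_diag !mxE wrap_signK.
exists S; split; first by case: (mulmx1_unit SS).
move=> j n_gt1; apply/matrixP => i k.
rewrite mul_diag_mx mul_mx_diag !mxE.
rewrite (gen_coef_oppz _ _ _ _ n_gt1 (valP (enum_val k))).
by rewrite [RHS]mulrC !mulrA wrap_signK mul1r.
Qed.
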